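(* Let $K$ be any local field with ring of integers $\mathcal O$, residue field $\mathbf F$, and $q=\#\mathbf F$. Let $(H_n)_{n\ge1}$ be a sequence of open subgroups of $\mathcal O$ with $H_{n+1}\subseteq H_n$ and $\bigcap_n H_n=0$. Suppose $e_0,e_1,e_2,\dots\in C(\mathcal O,K)$ each map $\mathcal O$ into $\mathcal O$, and that for every $n\ge1$ the reductions $\overline e_0,\dots,\overline e_{n-1}\in C(\mathcal O,\mathbf F)$ are constant on cosets of $H_n$ and the induced map $\mathcal O/H_n\to\mathbf F^n$, $x\mapsto(\overline e_0(x),\dots,\overline e_{n-1}(x))$, is bijective (so $\#\mathcal O/H_n=q^n$). Then the extension of $(e_j)$ by $q$-digit expansions is an orthonormal basis of $C(\mathcal O,K)$.
   Context: A local field is a field complete with respect to a nontrivial discrete nonarchimedean absolute value with finite residue field. $C(\mathcal O,K)$ is the $K$-Banach space of continuous functions $\mathcal O\to K$ with the sup-norm; $C(\mathcal O,\mathbf F)$ is the space of continuous (i.e. locally constant) maps to the discrete field $\mathbf F$; $\overline e$ denotes $e$ composed with reduction $\mathcal O\to\mathbf F$. An orthonormal basis of a $K$-Banach space $E$ is a sequence $\{f_n\}$ such that each $x\in E$ is $x=\sum c_nf_n$ with $c_n\in K$, $c_n\to0$, $\|x\|=\max|c_n|$. Extension by $q$-digits: for $i=c_0+c_1q+\dots+c_{n-1}q^{n-1}$ with $0\le c_j\le q-1$, set $f_i=e_0^{c_0}\cdots e_{n-1}^{c_{n-1}}$ (pointwise products, $e_j^0=1$). *)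

From HB Require Import structures.
From mathcomp Require Import all_boot all_order all_algebra all_field.
From mathcomp Require Import boolp classical_sets reals.
Set Implicit Arguments. Unset Strict Implicit. Unset Printing Implicit Defensive.
Import Order.TTheory GRing.Theory Num.Theory.
Local Open Scope ring_scope.
Local Open Scope classical_set_scope.

Section LocalField.
Variables (R : realType) (K : fieldType) (abs : K -> R).

Definition nonarch_abs : Prop :=
  [/\ (forall x, 0 <= abs x), (forall x, abs x = 0 <-> x = 0),
      (forall x y, abs (x * y) = abs x * abs y) &
      (forall x y, abs (x + y) <= Num.max (abs x) (abs y))].

Definition discrete_nontrivial_abs : Prop :=
  exists pi : K, 0 < abs pi < 1 /\
    forall x, x != 0 -> exists z : int, abs x = abs pi ^ z.

Definition abs_cauchy (u : nat -> K) : Prop :=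
  forall eps : R, 0 < eps -> exists N : nat, forall m n : nat,
    (N <= m)%N -> (N <= n)%N -> abs (u m - u n) < eps.

Definition abs_converges (u : nat -> K) (l : K) : Prop :=
  forall eps : R, 0 < eps -> exists N : nat, forall n : nat,
    (N <= n)%N -> abs (u n - l) < eps.

Definition abs_complete : Prop :=
  forall u : nat -> K, abs_cauchy u -> exists l, abs_converges u l.

Definition intO : set K := [set x | abs x <= 1].

Definition residue_map (F : fieldType) (red : K -> F) : Prop :=
  [/\ (forall x y, intO x -> intO y -> red (x + y) = red x + red y),
      (forall x y, intO x -> intO y -> red (x * y) = red x * red y),
      red 1 = 1,
      (forall a : F, exists2 x, intO x & red x = a) &
      (forall x, intO x -> (red x = 0 <-> abs x < 1))].

Definition local_field (F : finFieldType) (red : K -> F) : Prop :=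
  [/\ nonarch_abs, discrete_nontrivial_abs, abs_complete & residue_map red].

Definition open_subgroup_O (H : set K) : Prop :=
  [/\ H `<=` intO, H 0, (forall x y, H x -> H y -> H (x - y)) &
      (forall x, H x -> exists2 d : R, 0 < d &
          forall y, abs (y - x) < d -> H y)].

(* continuity on O of a function O -> K (represented as K -> K) *)
Definition cont_on_O (g : K -> K) : Prop :=
  forall x, intO x -> forall eps : R, 0 < eps -> exists2 d : R, 0 < d &
    forall y, intO y -> abs (y - x) < d -> abs (g y - g x) < eps.

Definition sup_norm (g : K -> K) : R := sup [set abs (g x) | x in intO].

Definition orthonormal_basis (f : nat -> K -> K) : Prop :=
  (forall n, cont_on_O (f n)) /\
  forall g, cont_on_O g -> exists c : nat -> K,
    [/\ abs_converges c 0,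
        (forall eps : R, 0 < eps -> exists N : nat, forall m : nat, (N <= m)%N ->
            forall x, intO x -> abs (g x - \sum_(n < m) c n * f n x) < eps) &
        sup_norm g = sup [set abs (c n) | n in [set: nat]]].

End LocalField.

(* extension by q-digits: f_i = prod_j e_j ^ (j-th q-digit of i);
   digits beyond position i vanish, so the product over j < i suffices *)
Definition digit_ext (K : fieldType) (q : nat) (e : nat -> K -> K) (i : nat)
  (x : K) : K := \prod_(j < i) e j x ^+ ((i %/ q ^ j) %% q).

From HB Require Import structures.
From mathcomp Require Import all_boot all_order all_algebra all_field.
From mathcomp Require Import boolp classical_sets reals.
From mathcomp Require Import ring.
Import Order.TTheory GRing.Theory Num.Theory.
Local Open Scope ring_scope.
Local Open Scope classical_set_scope.
Set Implicit Arguments. Unset Strict Implicit. Unset Printing Implicit Defensive.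

(* Via the e_j, reduction modulo the maximal ideal identifies O/H_n with F^n,
   and every function F^n -> F is a linear combination of the monomials
   prod_j r_j^(c_j) with exponents c_j < q, i.e. of the reductions of the f_i
   with i < q^n.  A continuous g : O -> O is, modulo the maximal ideal,
   constant on the cosets of some H_n, so it agrees with an O-combination of
   the f_i up to an error in pi O.  Applying this to the error divided by pi^k
   and iterating gives g = sum c_i f_i with c_i in O and c_i -> 0.  For the
   norm identity, scale g so that its supremum (attained, O being compact) is
   1: if all |c_i| were < 1, every partial sum would have norm < 1 at the
   point where |g| = 1. *)

Lemma big_ord_idx_tail (T : Type) (idx : T) (op : Monoid.law idx) (G : nat -> T) N M :
  (forall i, (N <= i)%N -> G i = idx) -> (N <= M)%N ->
  \big[op/idx]_(i < M) G i = \big[op/idx]_(i < N) G i.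
Proof.
move=> Gidx NM; rewrite (big_ord_widen M G NM) [RHS]big_mkcond /=.
by apply: eq_bigr => i _; case: ltnP => // /Gidx.
Qed.

Lemma big_ord_mul_split (V : nmodType) (Q m : nat) (G : nat -> V) :
  \sum_(i < Q * m) G i = \sum_(c < m) \sum_(i < Q) G (i + c * Q)%N.
Proof.
elim: m => [|m IH]; first by rewrite muln0 !big_ord0.
rewrite mulnS addnC big_split_ord /= IH big_ord_recr /=; congr (_ + _).
by apply: eq_bigr => i _; rewrite mulnC addnC.
Qed.

Lemma dependent_choice_nat (T : Type) (P : nat -> T -> Prop)
    (Q : nat -> T -> T -> Prop) (x0 : T) :
  P 0%N x0 -> (forall k x, P k x -> exists2 y, P k.+1 y & Q k x y) ->
  exists u : nat -> T, forall k, P k (u k) /\ Q k (u k) (u k.+1).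
Proof.
move=> P0 step.
have step' (kx : nat * T) : exists y, P kx.1 kx.2 -> P kx.1.+1 y /\ Q kx.1 kx.2 y.
  case: kx => k x; have [/step [y Py Qy]|nPkx] := pselect (P k x); first by exists y.
  by exists x => /nPkx.
have [nxt Hnxt] := choice step'.
pose u := nat_rect (fun _ => T) x0 (fun k x => nxt (k, x)).
have Pu k : P k (u k) by elim: k => [//|k IH]; exact: (Hnxt (k, u k) IH).1.
by exists u => k; split; [exact: Pu | exact: (Hnxt (k, u k) (Pu k)).2].
Qed.

Lemma seq_argmax (T : eqType) (d : Order.disp_t) (U : orderType d) (phi : T -> U)
    (x0 : T) (s : seq T) :
  exists2 t, t \in x0 :: s & forall u, u \in x0 :: s -> (phi u <= phi t)%O.
Proof.
elim: s x0 => [|a s IH] x0; first by exists x0 => [|u]; rewrite !inE // => /eqP ->.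
have [t ts tmax] := IH a.
have [x0t|tx0] := leP (phi x0) (phi t).
  exists t => [|u]; first by rewrite inE ts orbT.
  by rewrite inE => /predU1P [->|/tmax].
exists x0 => [|u]; first exact: mem_head.
rewrite inE => /predU1P [->//|/tmax ut]; exact: le_trans ut (ltW tx0).
Qed.

Lemma sup_eq_max (R : realType) (S : set R) M :
  S M -> (forall s, S s -> s <= M) -> sup S = M.
Proof.
move=> SM ubM; apply/le_anti/andP; split; first by apply: ge_sup => //; exists M.
by apply: sup_upper_bound => //; split; [exists M | exists M].
Qed.

Lemma Bernoulli_ineq (R : numDomainType) (d : R) k :
  0 <= d -> 1 + k%:R * d <= (1 + d) ^+ k.
Proof.
move=> d0; elim: k => [|k IH]; first by rewrite mul0r addr0 expr0.
rewrite exprS -natr1 mulrDl mul1r.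
apply: le_trans (ler_wpM2l (addr_ge0 ler01 d0) IH).
rewrite -subr_ge0 (_ : _ - _ = k%:R * d * d); first by rewrite !mulr_ge0 ?ler0n.
ring.
Qed.

Lemma exprn_lt_eps (R : realType) (r eps : R) :
  0 < r < 1 -> 0 < eps -> exists k, r ^+ k < eps.
Proof.
move=> /andP [r0 r1] e0; set d := r^-1 - 1.
have d0 : 0 < d by rewrite subr_gt0 invf_gt1.
have b0 : 0 <= (eps * d)^-1 by rewrite invr_ge0 ltW ?mulr_gt0.
have := archi_boundP b0; set k := Num.Def.archi_bound _ => hk.
exists k.
have h1 : eps^-1 < k%:R * d.
  by move: hk; rewrite -(ltr_pM2r d0) invfM mulfVK ?gt_eqF.
have h2 : eps^-1 < (r^-1) ^+ k.
  apply: lt_le_trans h1 (le_trans (_ : _ <= 1 + k%:R * d) _); first by rewrite lerDr ler01.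
  by apply: le_trans (Bernoulli_ineq k (ltW d0)) _; rewrite /d addrC subrK.
by rewrite -[r]invrK exprVn -[eps]invrK ltf_pV2 ?posrE ?exprn_gt0 ?invr_gt0.
Qed.

Lemma seq_min_pos (T : eqType) (R : realDomainType) (s : seq T) (d : T -> R) :
  (forall x, x \in s -> 0 < d x) -> exists2 eta, 0 < eta & forall x, x \in s -> eta <= d x.
Proof.
elim: s => [|y s IH] dpos; first by exists 1.
have [x xs|eta eta0 etad] := IH; first by rewrite dpos // inE xs orbT.
exists (Num.min (d y) eta) => [|x]; first by rewrite lt_min eta0 dpos ?mem_head.
by rewrite inE ge_min => /predU1P [->|/etad ->]; rewrite ?lexx ?orbT.
Qed.

Section Digits.
Variable q : nat.
Hypothesis q_gt0 : (0 < q)%N.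

Definition digit (i j : nat) : nat := ((i %/ q ^ j) %% q)%N.

Lemma digit_small i j : (i < q ^ j)%N -> digit i j = 0%N.
Proof. by move=> ltij; rewrite /digit divn_small ?mod0n. Qed.

Lemma digit_addl i c n j : (j < n)%N -> digit (i + c * q ^ n) j = digit i j.
Proof.
move=> ltjn; have -> : (q ^ n = q ^ (n - j).-1 * q * q ^ j)%N.
  by rewrite -expnSr prednK ?subn_gt0 // -expnD subnK // ltnW.
by rewrite /digit addnC mulnA divnMDl ?expn_gt0 ?q_gt0 // mulnA modnMDl.
Qed.

Lemma digit_top i c n : (i < q ^ n)%N -> (c < q)%N -> digit (i + c * q ^ n) n = c.
Proof.
move=> ltiq ltcq; rewrite /digit addnC divnMDl ?expn_gt0 ?q_gt0 //.
by rewrite divn_small // addn0 modn_small.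
Qed.

Definition digit_monomial (S : comNzRingType) (n i : nat) (r : nat -> S) : S :=
  \prod_(j < n) r j ^+ digit i j.

Lemma digit_monomialS (S : comNzRingType) n i c (r : nat -> S) :
  (i < q ^ n)%N -> (c < q)%N ->
  digit_monomial n.+1 (i + c * q ^ n) r = digit_monomial n i r * r n ^+ c.
Proof.
move=> ltiq ltcq; rewrite /digit_monomial big_ord_recr /= digit_top //.
by congr (_ * _); apply: eq_bigr => j _; rewrite digit_addl.
Qed.

End Digits.

Section FiniteResidueField.
Variable F : finFieldType.
Local Notation q := #|F|.

Lemma card_finField_gt0 : (0 < q)%N. Proof. exact: ltnW (card_finNzRing_gt1 F). Qed.

Lemma eq_indicator_poly (a : F) : exists g : nat -> F, forall s : F,
  (s == a)%:R = \sum_(c < q) g c * s ^+ c.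
Proof.
pose p : {poly F} := 1 - ('X - a%:P) ^+ q.-1.
have size_p : (size p <= q)%N.
  apply: leq_trans (size_polyD _ _) _.
  rewrite size_polyN size_exp_XsubC prednK ?card_finField_gt0 // size_poly1.
  by rewrite geq_max card_finField_gt0 leqnn.
exists (fun c => p`_c) => s; rewrite -(horner_coef_wide _ size_p) /p.
rewrite !hornerE; have [->|sa] := eqVneq s a.
  by rewrite subrr expr0n -subn1 subn_eq0 leqNgt card_finNzRing_gt1 subr0.
(* Fermat: every nonzero element of F is a (q-1)-th root of unity *)
have: (s - a) ^+ q.-1 * (s - a) = 1 * (s - a).
  by rewrite -exprSr prednK ?card_finField_gt0 // expf_card mul1r.
by move/(mulIf _); rewrite subr_eq0 => ->; rewrite ?subrr.
Qed.

Lemma indicator_digit_expansion n (t : nat -> F) : exists beta : nat -> F,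
  forall r : nat -> F, \prod_(j < n) ((r j == t j)%:R : F) =
    \sum_(i < q ^ n) beta i * digit_monomial q n i r.
Proof.
elim: n => [|n [beta IH]].
  exists (fun _ => 1) => r; rewrite big_ord0 expn0 big_ord1.
  by rewrite /digit_monomial big_ord0 mulr1.
have [g Hg] := eq_indicator_poly (t n).
exists (fun i => g (i %/ q ^ n)%N * beta (i %% q ^ n)%N) => r.
rewrite big_ord_recr /= IH Hg expnSr mulr_sumr.
rewrite (big_ord_mul_split _ _ (fun i => g (i %/ q ^ n)%N * beta (i %% q ^ n)%N *
  digit_monomial q n.+1 i r)).
apply: eq_bigr => c _; rewrite mulr_suml; apply: eq_bigr => i _.
rewrite digit_monomialS ?card_finField_gt0 // addnC divnMDl ?expn_gt0 ?card_finField_gt0 //.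
by rewrite divn_small // addn0 modnMDl modn_small //; ring.
Qed.

Lemma fun_digit_expansion n (phi : {ffun 'I_n -> F} -> F) : exists A : nat -> F,
  forall r : nat -> F, phi [ffun j : 'I_n => r j] =
    \sum_(i < q ^ n) A i * digit_monomial q n i r.
Proof.
pose ext (t : {ffun 'I_n -> F}) j := if insub j is Some k then t k else 0.
have extE t (k : 'I_n) : ext t k = t k by rewrite /ext valK.
have [B HB] := choice (fun t => indicator_digit_expansion n (ext t)).
exists (fun i => \sum_t phi t * B t i) => r; set rn := [ffun j : 'I_n => r j].
have delta t : \prod_(j < n) ((r j == ext t j)%:R : F) = (t == rn)%:R.
  have [->|neq] := eqVneq t rn.
    by apply: big1 => j _; rewrite extE ffunE eqxx.
  have /existsP [j neqj] : [exists j, t j != r j].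
    rewrite -negb_forall; apply: contra neq => /forallP eqt.
    by apply/eqP/ffunP => j; rewrite ffunE; apply/eqP.
  by rewrite (bigD1 j) //= extE eq_sym (negPf neqj) mul0r.
have -> : phi rn = \sum_t phi t * (t == rn)%:R.
  rewrite (bigD1 rn) //= eqxx mulr1 big1 ?addr0 // => t /negPf ->.
  exact: mulr0.
under eq_bigr do rewrite -delta HB mulr_sumr.
rewrite exchange_big /=; apply: eq_bigr => i _; rewrite mulr_suml.
by apply: eq_bigr => t _; rewrite mulrA.
Qed.

End FiniteResidueField.

Section NonArchimedean.
Variables (R : realType) (K : fieldType) (abs : K -> R).
Hypothesis abs_na : nonarch_abs abs.

Lemma abs_ge0 x : 0 <= abs x. Proof. by case: abs_na. Qed.
Lemma abs_eq0 x : abs x = 0 <-> x = 0. Proof. by case: abs_na. Qed.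
Lemma absM x y : abs (x * y) = abs x * abs y. Proof. by case: abs_na. Qed.
Lemma abs_ultra x y : abs (x + y) <= Num.max (abs x) (abs y). Proof. by case: abs_na. Qed.

Lemma abs0 : abs 0 = 0. Proof. exact/abs_eq0. Qed.

Lemma abs_neq0 x : x != 0 -> abs x != 0.
Proof. by apply: contraNneq => /abs_eq0 ->. Qed.

Lemma abs1 : abs 1 = 1.
Proof.
apply: (mulfI (abs_neq0 (oner_neq0 K))).
by rewrite -absM !mulr1.
Qed.

Lemma absN1 : abs (-1) = 1.
Proof.
have sq1 : abs (-1) ^+ 2 = 1 by rewrite expr2 -absM mulrNN mulr1 abs1.
by apply/eqP; move/eqP: sq1; rewrite pexpr_eq1 ?abs_ge0.
Qed.

Lemma absN x : abs (- x) = abs x. Proof. by rewrite -mulN1r absM absN1 mul1r. Qed.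

Lemma abs_distC x y : abs (x - y) = abs (y - x). Proof. by rewrite -absN opprB. Qed.

Lemma absX x k : abs (x ^+ k) = abs x ^+ k.
Proof. by elim: k => [|k IH]; rewrite ?expr0 ?abs1 // !exprS absM IH. Qed.

Lemma absV x : abs x^-1 = (abs x)^-1.
Proof.
have [->|x0] := eqVneq x 0; first by rewrite invr0 abs0 invr0.
by apply: (mulfI (abs_neq0 x0)); rewrite -absM !mulfV ?abs1 ?abs_neq0.
Qed.

Lemma abs_ultra_le x y B : abs x <= B -> abs y <= B -> abs (x + y) <= B.
Proof. by move=> xB yB; apply: le_trans (abs_ultra x y) _; rewrite ge_max xB. Qed.

Lemma abs_ultra_lt x y B : abs x < B -> abs y < B -> abs (x + y) < B.
Proof. by move=> xB yB; apply: le_lt_trans (abs_ultra x y) _; rewrite gt_max xB. Qed.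

Lemma abs_ultra_trans_le x y z B :
  abs (x - y) <= B -> abs (y - z) <= B -> abs (x - z) <= B.
Proof. by move=> xy yz; have := abs_ultra_le xy yz; rewrite addrA subrK. Qed.

Lemma abs_ultra_trans_lt x y z B :
  abs (x - y) < B -> abs (y - z) < B -> abs (x - z) < B.
Proof. by move=> xy yz; have := abs_ultra_lt xy yz; rewrite addrA subrK. Qed.

Lemma abs_ultra_sum_le n (G : nat -> K) B : 0 <= B ->
  (forall i, (i < n)%N -> abs (G i) <= B) -> abs (\sum_(i < n) G i) <= B.
Proof.
move=> B0 GB; elim/big_rec: _ => [|i y _ yB]; first by rewrite abs0.
exact: abs_ultra_le (GB _ (ltn_ord i)) yB.
Qed.

Lemma abs_ultra_sum_lt n (G : nat -> K) B : 0 < B ->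
  (forall i, (i < n)%N -> abs (G i) < B) -> abs (\sum_(i < n) G i) < B.
Proof.
move=> B0 GB; elim/big_rec: _ => [|i y _ yB]; first by rewrite abs0.
exact: abs_ultra_lt (GB _ (ltn_ord i)) yB.
Qed.

Lemma abs_mul_lt a b eps : 0 < eps -> abs b < eps / (abs a + 1) -> abs (a * b) < eps.
Proof.
move=> e0 b_lt; have a1 : 0 < abs a + 1 by rewrite ltr_wpDl ?abs_ge0.
apply: le_lt_trans (_ : _ <= (abs a + 1) * abs b) _.
  by rewrite absM ler_wpM2r ?abs_ge0 ?lerDl ?ler01.
by rewrite mulrC -ltr_pdivlMr.
Qed.

Local Notation O := (intO abs).

Lemma intO0 : O 0. Proof. by rewrite /intO /= abs0 ler01. Qed.
Lemma intO1 : O 1. Proof. by rewrite /intO /= abs1. Qed.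
Lemma intOD x y : O x -> O y -> O (x + y). Proof. exact: abs_ultra_le. Qed.
Lemma intON x : O x -> O (- x). Proof. by rewrite /intO /= absN. Qed.
Lemma intOB x y : O x -> O y -> O (x - y). Proof. by move=> Ox /intON; apply: intOD. Qed.

Lemma intOM x y : O x -> O y -> O (x * y).
Proof. by rewrite /intO /= absM => Ox Oy; apply: mulr_ile1; rewrite ?abs_ge0. Qed.

Lemma intOX x k : O x -> O (x ^+ k).
Proof. by rewrite /intO /= absX => Ox; apply: exprn_ile1; rewrite ?abs_ge0. Qed.

Lemma intO_sum n (G : nat -> K) : (forall i, (i < n)%N -> O (G i)) -> O (\sum_(i < n) G i).
Proof. exact: abs_ultra_sum_le ler01. Qed.

Lemma intO_prod n (G : nat -> K) : (forall i, (i < n)%N -> O (G i)) -> O (\prod_(i < n) G i).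
Proof.
move=> OG; elim/big_rec: _ => [|i y _ Oy]; first exact: intO1.
exact: intOM (OG _ (ltn_ord i)) Oy.
Qed.

Section Residue.
Variables (F : fieldType) (red : K -> F).
Hypothesis red_res : residue_map abs red.

Lemma redD x y : O x -> O y -> red (x + y) = red x + red y.
Proof. by case: red_res => + _ _ _ _; apply. Qed.
Lemma redM x y : O x -> O y -> red (x * y) = red x * red y.
Proof. by case: red_res => _ + _ _ _; apply. Qed.
Lemma red1 : red 1 = 1. Proof. by case: red_res. Qed.
Lemma red_surj a : exists2 x, O x & red x = a. Proof. by case: red_res => _ _ _ + _; apply. Qed.
Lemma red_eq0 x : O x -> (red x = 0 <-> abs x < 1). Proof. by case: red_res => _ _ _ _; apply. Qed.

Lemma red0 : red 0 = 0.
Proof. by apply: (addIr (red 0)); rewrite add0r -(redD intO0 intO0) addr0. Qed.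

Lemma redN x : O x -> red (- x) = - red x.
Proof. by move=> Ox; apply: (addrI (red x)); rewrite -(redD Ox (intON Ox)) !subrr red0. Qed.

Lemma redB x y : O x -> O y -> red (x - y) = red x - red y.
Proof. by move=> Ox Oy; rewrite (redD Ox (intON Oy)) (redN Oy). Qed.

Lemma redX x k : O x -> red (x ^+ k) = red x ^+ k.
Proof.
move=> Ox; elim: k => [|k IH]; first by rewrite !expr0 red1.
by rewrite !exprS (redM Ox (intOX k Ox)) IH.
Qed.

Lemma red_sum n (G : nat -> K) : (forall i, (i < n)%N -> O (G i)) ->
  red (\sum_(i < n) G i) = \sum_(i < n) red (G i).
Proof.
move=> OG; elim: n OG => [|n IH] OG; first by rewrite !big_ord0 red0.
have OG' i : (i < n)%N -> O (G i) by move=> lt_in; apply/OG/ltnW.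
by rewrite !big_ord_recr /= (redD (intO_sum OG') (OG _ (ltnSn n))) IH.
Qed.

Lemma red_prod n (G : nat -> K) : (forall i, (i < n)%N -> O (G i)) ->
  red (\prod_(i < n) G i) = \prod_(i < n) red (G i).
Proof.
move=> OG; elim: n OG => [|n IH] OG; first by rewrite !big_ord0 red1.
have OG' i : (i < n)%N -> O (G i) by move=> lt_in; apply/OG/ltnW.
by rewrite !big_ord_recr /= (redM (intO_prod OG') (OG _ (ltnSn n))) IH.
Qed.

Lemma red_eq x y : O x -> O y -> red x = red y <-> abs (x - y) < 1.
Proof.
move=> Ox Oy; rewrite -(red_eq0 (intOB Ox Oy)) (redB Ox Oy).
by split=> [->|/eqP]; [rewrite subrr | rewrite subr_eq0 => /eqP].
Qed.

End Residue.

Local Notation cont := (cont_on_O abs).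

Lemma cont_on_O_eq g h : (forall x, g x = h x) -> cont g -> cont h.
Proof.
move=> eqgh cg x Ox eps e0; have [d d0 Hd] := cg x Ox eps e0.
by exists d => // y Oy xy; rewrite -!eqgh; apply: Hd.
Qed.

Lemma cont_on_O_cst c : cont (fun _ => c).
Proof. by move=> x Ox eps e0; exists 1 => // y _ _; rewrite subrr abs0. Qed.

Lemma cont_on_OD g h : cont g -> cont h -> cont (fun x => g x + h x).
Proof.
move=> cg ch x Ox eps e0.
have [[d1 d10 Hd1] [d2 d20 Hd2]] := (cg x Ox eps e0, ch x Ox eps e0).
exists (Num.min d1 d2) => [|y Oy]; first by rewrite lt_min d10.
rewrite lt_min => /andP [yd1 yd2]; rewrite opprD addrACA.
exact: abs_ultra_lt (Hd1 y Oy yd1) (Hd2 y Oy yd2).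
Qed.

Lemma cont_on_OZ c g : cont g -> cont (fun x => c * g x).
Proof.
move=> cg x Ox eps e0; have c1 : 0 < abs c + 1 by rewrite ltr_wpDl ?abs_ge0.
have [d d0 Hd] := cg x Ox (eps / (abs c + 1)) (divr_gt0 e0 c1).
by exists d => // y Oy xy; rewrite -mulrBr abs_mul_lt ?Hd.
Qed.

Lemma cont_on_OB g h : cont g -> cont h -> cont (fun x => g x - h x).
Proof.
move=> cg ch; apply: (@cont_on_O_eq (fun x => g x + (-1) * h x)).
  by move=> x; rewrite mulN1r.
by apply: cont_on_OD => //; apply: cont_on_OZ.
Qed.

Lemma cont_on_OM g h : cont g -> cont h ->
  (forall x, O x -> O (g x)) -> (forall x, O x -> O (h x)) ->
  cont (fun x => g x * h x).
Proof.
move=> cg ch Og Oh x Ox eps e0.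
have [[d1 d10 Hd1] [d2 d20 Hd2]] := (cg x Ox eps e0, ch x Ox eps e0).
exists (Num.min d1 d2) => [|y Oy]; first by rewrite lt_min d10.
rewrite lt_min => /andP [yd1 yd2].
have -> : g y * h y - g x * h x = g y * (h y - h x) + (g y - g x) * h x by ring.
apply: abs_ultra_lt; rewrite absM.
  by apply: le_lt_trans (Hd2 y Oy yd2); rewrite ler_piMl ?abs_ge0 ?Og.
by apply: le_lt_trans (Hd1 y Oy yd1); rewrite ler_piMr ?abs_ge0 ?Oh.
Qed.

Lemma cont_on_O_sum n (G : nat -> K -> K) : (forall i, (i < n)%N -> cont (G i)) ->
  cont (fun x => \sum_(i < n) G i x).
Proof.
elim: n => [|n IH] cG.
  by apply: (@cont_on_O_eq (fun _ => 0)) => [x|]; [rewrite big_ord0 | exact: cont_on_O_cst].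
apply: (@cont_on_O_eq (fun x => \sum_(i < n) G i x + G n x)) => [x|].
  by rewrite big_ord_recr.
by apply: cont_on_OD; [apply: IH => i /ltnW/cG | apply: cG].
Qed.

Lemma cont_on_O_prod_pow (e : nat -> K -> K) (m : nat -> nat) n :
  (forall j, cont (e j) /\ (forall x, O x -> O (e j x))) ->
  cont (fun x => \prod_(j < n) e j x ^+ m j) /\
  (forall x, O x -> O (\prod_(j < n) e j x ^+ m j)).
Proof.
move=> ce; have Opow j k x : O x -> O (e j x ^+ k) by move/(ce j).2/intOX.
have Oprod n' x : O x -> O (\prod_(j < n') e j x ^+ m j).
  by move=> Ox; apply: (intO_prod (G := fun j => e j x ^+ m j)) => j _; apply: Opow.
split; last exact: Oprod.
have cpow j k : cont (fun x => e j x ^+ k).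
  elim: k => [|k IH].
    by apply: (@cont_on_O_eq (fun _ => 1)) => [x|]; [rewrite expr0 | exact: cont_on_O_cst].
  apply: (@cont_on_O_eq (fun x => e j x * e j x ^+ k)) => [x|]; first by rewrite exprS.
  by apply: cont_on_OM => //; [exact: (ce j).1 | exact: (ce j).2 | exact: Opow].
elim: n => [|n IH].
  by apply: (@cont_on_O_eq (fun _ => 1)) => [x|]; [rewrite big_ord0 | exact: cont_on_O_cst].
apply: (@cont_on_O_eq (fun x => (\prod_(j < n) e j x ^+ m j) * e n x ^+ m n)) => [x|].
  by rewrite big_ord_recr.
by apply: cont_on_OM => // x; [exact: Oprod | exact: Opow].
Qed.

Lemma digit_ext_cont q (e : nat -> K -> K) :
  (forall j, cont (e j) /\ (forall x, O x -> O (e j x))) -> forall i, cont (digit_ext q e i).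
Proof. by move=> e_cont i; exact: (cont_on_O_prod_pow (digit q i) i e_cont).1. Qed.

Lemma digit_ext_intO q (e : nat -> K -> K) :
  (forall j, cont (e j) /\ (forall x, O x -> O (e j x))) ->
  forall i x, O x -> O (digit_ext q e i x).
Proof. by move=> e_cont i; exact: (cont_on_O_prod_pow (digit q i) i e_cont).2. Qed.

Section LocalField.
Variables (F : finFieldType) (red : K -> F) (pi : K).
Hypothesis red_res : residue_map abs red.
Hypothesis pi_unif : 0 < abs pi < 1.
Hypothesis abs_discrete : forall x, x != 0 -> exists z : int, abs x = abs pi ^ z.
Hypothesis abs_compl : abs_complete abs.
Local Notation rho := (abs pi).

Lemma rho_gt0 : 0 < rho. Proof. by case/andP: pi_unif. Qed.
Lemma rho_lt1 : rho < 1. Proof. by case/andP: pi_unif. Qed.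
Lemma rhoX_gt0 k : 0 < rho ^+ k. Proof. exact: exprn_gt0 rho_gt0. Qed.

Lemma rhoX_le k m : (k <= m)%N -> rho ^+ m <= rho ^+ k.
Proof. by move=> km; rewrite ler_wiXn2l ?(ltW rho_gt0) ?(ltW rho_lt1). Qed.

Lemma intO_piX k : O (pi ^+ k). Proof. exact/intOX/ltW/rho_lt1. Qed.

Lemma rhoX_lt eps : 0 < eps -> exists k, rho ^+ k < eps.
Proof. exact: exprn_lt_eps. Qed.

Lemma abs_lt1_le_rho x : abs x < 1 -> abs x <= rho.
Proof.
have [->|/abs_discrete [[k|k] ->] ] := eqVneq x 0; first by rewrite abs0 ltW ?rho_gt0.
  rewrite -exprnP; case: k => [|k _]; first by rewrite expr0 ltxx.
  by rewrite exprS ler_piMr ?(ltW rho_gt0) ?exprn_ile1 ?(ltW rho_gt0) ?(ltW rho_lt1).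
rewrite NegzE -exprz_inv -exprnP exprVn invf_lt1 ?rhoX_gt0 // => lt1rho.
by have := lt_le_trans lt1rho (rhoX_le (leq0n k.+1)); rewrite expr0 ltxx.
Qed.

Lemma geometric_cauchy_limit (u : nat -> K) :
  (forall k, abs (u k.+1 - u k) <= rho ^+ k) -> exists l, forall k, abs (l - u k) <= rho ^+ k.
Proof.
move=> uS.
have u_shift k m : abs (u (m + k)%N - u k) <= rho ^+ k.
  elim: m => [|m IH]; first by rewrite subrr abs0 ltW ?rhoX_gt0.
  by apply: abs_ultra_trans_le IH; apply: le_trans (uS _) (rhoX_le _); rewrite leq_addl.
have u_near k m n : (k <= m)%N -> (k <= n)%N -> abs (u m - u n) <= rho ^+ k.
  move=> km kn; apply: (@abs_ultra_trans_le _ (u k)); first by rewrite -(subnK km).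
  by rewrite abs_distC -(subnK kn).
have [l ul] : exists l, abs_converges abs u l.
  apply: abs_compl => eps e0; have [k Hk] := rhoX_lt e0.
  by exists k => m n km kn; apply: le_lt_trans (u_near _ _ _ km kn) Hk.
exists l => k; rewrite leNgt; apply/negP => lt_k.
have [N HN] := ul _ (lt_trans (rhoX_gt0 k) lt_k).
have far : abs (l - u (maxn N k)) < abs (l - u k).
  by rewrite abs_distC; apply: HN; exact: leq_maxl.
have near := le_lt_trans (u_near k (maxn N k) k (leq_maxr _ _) (leqnn _)) lt_k.
by have := abs_ultra_trans_lt far near; rewrite ltxx.
Qed.

Definition residue_lift (a : F) : K := s2val (cid2 (red_surj red_res a)).

Lemma residue_liftP a : O (residue_lift a) /\ red (residue_lift a) = a.
Proof. by rewrite /residue_lift; case: cid2. Qed.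

Lemma pi_neq0 : pi != 0.
Proof. by apply: contraTneq rho_gt0 => ->; rewrite abs0 ltxx. Qed.

Lemma residue_ball_split a y k : O a -> O y -> abs (y - a) <= rho ^+ k ->
  abs (y - (a + pi ^+ k * residue_lift (red ((y - a) / pi ^+ k)))) <= rho ^+ k.+1.
Proof.
move=> Oa Oy ya; set z := (y - a) / pi ^+ k.
have pik0 : pi ^+ k != 0 := expf_neq0 k pi_neq0.
have Oz : O z by rewrite /intO /= /z absM absV absX ler_pdivrMr ?rhoX_gt0 // mul1r.
have [Olift rlift] := residue_liftP (red z).
have zlift : abs (z - residue_lift (red z)) <= rho.
  by apply/abs_lt1_le_rho/(red_eq red_res Oz Olift); rewrite rlift.
have yz : y - a = pi ^+ k * z by rewrite /z mulrC divfK.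
rewrite opprD addrA yz -mulrBr absM absX exprSr.
by rewrite ler_wpM2l ?exprn_ge0 ?(ltW rho_gt0).
Qed.

Definition finitely_covered (d : K -> R) (a : K) (k : nat) : Prop :=
  exists xs : seq K, (forall x, x \in xs -> O x) /\
    forall y, O y -> abs (y - a) <= rho ^+ k -> exists2 x, x \in xs & abs (y - x) < d x.

Lemma finitely_covered_split d a k : O a ->
  (forall s, finitely_covered d (a + pi ^+ k * residue_lift s) k.+1) ->
  finitely_covered d a k.
Proof.
move=> Oa /choice [XS HXS].
exists (flatten [seq XS s | s <- enum F]); split=> [x /flatten_mapP [s _ xs]|y Oy ya].
  exact: (HXS s).1.
have [x xs yx] := (HXS _).2 y Oy (residue_ball_split Oa Oy ya).
by exists x => //; apply/flatten_mapP; exists (red ((y - a) / pi ^+ k)); rewrite ?mem_enum.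
Qed.

(* Without a finite subcover, pigeonholing over the residues yields nested
   balls of radii rho^k admitting none; their centres converge to some l, and
   the ball of radius d l around l already covers one of them. *)
Lemma intO_finite_cover d : (forall x, O x -> 0 < d x) ->
  exists xs : seq K, (forall x, x \in xs -> O x) /\
    forall y, O y -> exists2 x, x \in xs & abs (y - x) < d x.
Proof.
move=> dpos; suff [xs [Oxs cover]] : finitely_covered d 0 0.
  by exists xs; split=> // y Oy; apply: cover; rewrite ?subr0 ?expr0.
apply: contrapT => not0.
have step k a : O a /\ ~ finitely_covered d a k ->
    exists2 b, O b /\ ~ finitely_covered d b k.+1 & abs (b - a) <= rho ^+ k.
  case=> Oa /(contra_not (finitely_covered_split Oa)) /existsNP [s ns].
  have [Olift _] := residue_liftP s.
  exists (a + pi ^+ k * residue_lift s); first by split=> //; apply/intOD/intOM/Olift/intO_piX.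
  by rewrite addrC addKr absM absX ler_piMr ?exprn_ge0 ?(ltW rho_gt0).
have [u Hu] := dependent_choice_nat (P := fun k a => O a /\ ~ finitely_covered d a k)
  (Q := fun k a b => abs (b - a) <= rho ^+ k) (conj intO0 not0) step.
have [l Hl] := geometric_cauchy_limit (fun k => (Hu k).2).
have Ol : O l.
  have Olu0 : O (l - u 0%N) by move: (Hl 0%N); rewrite expr0.
  by rewrite -(subrK (u 0%N) l); apply: intOD Olu0 (Hu 0%N).1.1.
have [k Hk] := rhoX_lt (dpos l Ol).
apply: (Hu k).1.2; exists [:: l]; split=> [x|y Oy yu]; first by rewrite inE => /eqP ->.
exists l; first exact: mem_head.
by apply: le_lt_trans Hk; apply: abs_ultra_trans_le yu _; rewrite abs_distC.
Qed.

Lemma unif_cont_on_O g eps : cont g -> 0 < eps -> exists2 eta, 0 < eta &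
  forall x y, O x -> O y -> abs (x - y) < eta -> abs (g x - g y) < eps.
Proof.
move=> cg e0.
have pointwise x : exists d, O x -> 0 < d /\
    forall y, O y -> abs (y - x) < d -> abs (g y - g x) < eps.
  have [Ox|nOx] := pselect (O x); last by exists 0 => /nOx.
  by have [d d0 Hd] := cg x Ox eps e0; exists d.
have [D HD] := choice pointwise.
have [xs [Oxs cover]] := intO_finite_cover (fun x Ox => (HD x Ox).1).
have [eta eta0 etaD] := seq_min_pos (fun x xsx => (HD x (Oxs x xsx)).1).
exists eta => // x y Ox Oy xy; have [z zs xz] := cover x Ox.
have [_ Hz] := HD z (Oxs z zs).
have yz : abs (y - z) < D z.
  by apply: abs_ultra_trans_lt xz; rewrite abs_distC (lt_le_trans xy (etaD z zs)).
by apply: abs_ultra_trans_lt (Hz x Ox xz) _; rewrite abs_distC; apply: Hz.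
Qed.

Lemma abs_attains_max g : cont g ->
  exists2 x0, O x0 & forall x, O x -> abs (g x) <= abs (g x0).
Proof.
move=> cg; have [g0|/existsNP [x1 /not_implyP [Ox1 /eqP gx1]]] :=
  pselect (forall x, O x -> g x = 0).
  by exists 0 => [|x Ox]; [exact: intO0 | rewrite g0 // abs0 abs_ge0].
have e0 : 0 < abs (g x1) by rewrite lt_def abs_neq0 // abs_ge0.
have [eta eta0 Heta] := unif_cont_on_O cg e0.
have [xs [Oxs cover]] := intO_finite_cover (d := fun _ => eta) (fun _ _ => eta0).
have [t ts tmax] := seq_argmax (fun x => abs (g x)) x1 xs.
exists t => [|x Ox]; first by move: ts; rewrite inE => /predU1P [->|/Oxs].
have [z zs xz] := cover x Ox.
rewrite -(subrK (g z) (g x)); apply: abs_ultra_le.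
  by apply/ltW/(lt_le_trans (Heta x z Ox (Oxs z zs) xz))/tmax/mem_head.
by apply: tmax; rewrite inE zs orbT.
Qed.

Section Filtration.
Variable H : nat -> set K.
Hypothesis H_open : forall n, (1 <= n)%N -> open_subgroup_O abs (H n).
Hypothesis H_decr : forall n, (1 <= n)%N -> H n.+1 `<=` H n.
Hypothesis H_cap : forall x, (forall n, (1 <= n)%N -> H n x) <-> x = 0.

Lemma H_mono n m : (1 <= n)%N -> (n <= m)%N -> H m `<=` H n.
Proof.
move=> n1; elim: m => [|m IH]; first by move=> n0; move: (leq_trans n1 n0).
rewrite leq_eqVlt => /predU1P [-> //|/ltnSE nm] x Hx.
exact/IH/(H_decr (leq_trans n1 nm)).
Qed.

Lemma H_avoids_ball x : x != 0 -> exists n, exists2 d, (1 <= n)%N /\ 0 < d &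
  forall y, abs (y - x) < d -> ~ H n y.
Proof.
move=> /eqP x0; have [n n1 nHx] : exists2 n, (1 <= n)%N & ~ H n x.
  apply: contrapT => allH; apply/x0/H_cap => n n1; apply: contrapT => nHx.
  by apply: allH; exists n.
have [_ H0 HB Hopen] := H_open n1; have [d d0 Hd] := Hopen 0 H0.
exists n, d => // y yx Hy; apply: nHx.
have -> : x = y - (y - x) by ring.
by apply: HB => //; apply: Hd; rewrite subr0.
Qed.

Lemma H_small delta : 0 < delta ->
  exists2 n, (1 <= n)%N & forall h, H n h -> abs h < delta.
Proof.
move=> delta0.
have pick x : exists nd : nat * R, delta <= abs x ->
    [/\ (1 <= nd.1)%N, 0 < nd.2 & forall y, abs (y - x) < nd.2 -> ~ H nd.1 y].
  have [dx|ndx] := pselect (delta <= abs x); last by exists (0%N, 0) => /ndx.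
  have /H_avoids_ball [n [d [n1 d0] Hd]] : x != 0.
    by apply: contraTneq dx => ->; rewrite abs0 -ltNge.
  by exists (n, d).
have [P HP] := choice pick.
pose d x := if delta <= abs x then (P x).2 else delta.
have [xs [Oxs cover]] : exists xs : seq K, (forall x, x \in xs -> O x) /\
    forall y, O y -> exists2 x, x \in xs & abs (y - x) < d x.
  by apply: intO_finite_cover => x _; rewrite /d; case: ifP => // /HP [].
set N := \max_(x <- xs) (P x).1.
exists (maxn 1 N) => [|h Hh]; first exact: leq_maxl.
have [HO _ _ _] := H_open (leq_maxl 1 N).
have [x xs_x] := cover h (HO h Hh); rewrite /d; case: ifP => [/HP [n1 _ nH] hx|].
  have Nx : ((P x).1 <= N)%N := @leq_bigmax_seq _ xs predT (fun x => (P x).1) x xs_x isT.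
  by case: (nH h hx); apply: H_mono Hh => //; apply: leq_trans Nx (leq_maxr 1 N).
move/negbT; rewrite -ltNge => xd hx.
by have := abs_ultra_lt hx xd; rewrite subrK.
Qed.

Lemma H_unif_cont g eps : cont g -> 0 < eps -> exists2 n, (1 <= n)%N &
  forall x y, O x -> O y -> H n (x - y) -> abs (g x - g y) < eps.
Proof.
move=> cg e0; have [eta eta0 Heta] := unif_cont_on_O cg e0.
have [n n1 Hn] := H_small eta0.
by exists n => // x y Ox Oy Hxy; apply: Heta => //; apply: Hn.
Qed.

Section Basis.
Variable e : nat -> K -> K.
Hypothesis e_cont : forall j, cont (e j) /\ (forall x, O x -> O (e j x)).
Hypothesis e_sep : forall n, (1 <= n)%N -> forall x y, O x -> O y ->
  (forall j, (j < n)%N -> red (e j x) = red (e j y)) -> H n (x - y).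
Hypothesis e_surj : forall n, (1 <= n)%N ->
  forall t : 'I_n -> F, exists2 x, O x & forall j : 'I_n, red (e j x) = t j.
Local Notation q := #|F|.
Local Notation f := (digit_ext q e).
Let f_cont := digit_ext_cont q e_cont.
Let f_intO := digit_ext_intO q e_cont.

Lemma red_digit_ext i n x : O x -> (i < q ^ n)%N ->
  red (f i x) = digit_monomial q n i (fun j => red (e j x)).
Proof.
move=> Ox ltiq; have q_gt1 := card_finNzRing_gt1 F.
rewrite /digit_ext (red_prod red_res (G := fun j => e j x ^+ digit q i j)); last first.
  by move=> j _; apply/intOX/(e_cont j).2.
have dig0 j : (minn i n <= j)%N -> digit q i j = 0%N.
  rewrite geq_min => /orP [ij|nj]; apply: digit_small.
    by apply: leq_trans (ltn_expl _ q_gt1) _; rewrite leq_exp2l.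
  by apply: leq_trans ltiq _; rewrite leq_exp2l.
have tail_red j : (minn i n <= j)%N -> red (e j x ^+ digit q i j) = 1.
  by move/dig0 ->; rewrite expr0 (red1 red_res).
have tail_mono j : (minn i n <= j)%N -> red (e j x) ^+ digit q i j = 1 by move/dig0 ->.
rewrite /digit_monomial (big_ord_idx_tail _ tail_red (geq_minl i n)).
rewrite (big_ord_idx_tail _ tail_mono (geq_minr i n)).
by apply: eq_bigr => j _; rewrite (redX red_res) //; exact: (e_cont j).2.
Qed.

(* Modulo the maximal ideal, h factors through O/H_n, which the e_j identify
   with F^n; the function so obtained on F^n is a combination of digit
   monomials, i.e. of the reductions of the f_i. *)
Lemma residue_approx h : cont h -> (forall x, O x -> O (h x)) ->
  exists N (a : nat -> K), [/\ forall i, O (a i), forall i, (N <= i)%N -> a i = 0 &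
    forall x, O x -> abs (h x - \sum_(i < N) a i * f i x) < 1].
Proof.
move=> ch Oh; have [n n1 Hn] := H_unif_cont ch ltr01.
have /choice [rep Hrep] : forall t : {ffun 'I_n -> F},
    exists x, O x /\ forall j : 'I_n, red (e j x) = t j.
  by move=> t; have [x Ox Hx] := e_surj n1 t; exists x.
have [A HA] := fun_digit_expansion (fun t => red (h (rep t))).
pose a i := if (i < q ^ n)%N then residue_lift (A i) else 0.
have Oa i : O (a i) by rewrite /a; case: ifP => _; [exact: (residue_liftP _).1 | exact: intO0].
exists (q ^ n)%N, a; split=> // [i|x Ox]; first by rewrite /a ltnNge => ->.
have Osum : O (\sum_(i < q ^ n) a i * f i x).
  by apply: (intO_sum (G := fun i => a i * f i x)) => i _; exact: intOM (Oa i) (f_intO i Ox).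
apply/(red_eq red_res (Oh x Ox) Osum).
set tx := [ffun j : 'I_n => red (e j x)].
have -> : red (h x) = red (h (rep tx)).
  apply/(red_eq red_res (Oh x Ox) (Oh _ (Hrep tx).1))/Hn => //; first exact: (Hrep tx).1.
  apply: e_sep => //; first exact: (Hrep tx).1.
  by move=> j ltjn; rewrite ((Hrep tx).2 (Ordinal ltjn)) ffunE.
rewrite [red (h (rep tx))](HA (fun j => red (e j x))).
rewrite (red_sum red_res (G := fun i => a i * f i x)) => [|i _]; last first.
  exact: intOM (Oa i) (f_intO i Ox).
apply: eq_bigr => i _; rewrite (redM red_res (Oa i) (f_intO i Ox)).
by rewrite (red_digit_ext Ox (ltn_ord i)) /a ltn_ord (residue_liftP _).2.
Qed.

Definition approx_order (g : K -> K) (k : nat) (c : nat -> K) (N : nat) : Prop :=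
  [/\ forall i, O (c i), forall i, (N <= i)%N -> c i = 0 &
      forall x, O x -> abs (g x - \sum_(i < N) c i * f i x) <= rho ^+ k].

Lemma approx_order0 g : (forall x, O x -> O (g x)) -> approx_order g 0 (fun=> 0) 0.
Proof.
by move=> Og; split=> // [i|x Ox]; [exact: intO0 | rewrite big_ord0 subr0 expr0; apply: Og].
Qed.

Lemma approx_order_step g k c N : cont g -> approx_order g k c N ->
  exists c' N', approx_order g k.+1 c' N' /\ forall i, abs (c' i - c i) <= rho ^+ k.
Proof.
move=> cg [Oc c0 gc]; have pik0 := expf_neq0 k pi_neq0.
pose r x := (g x - \sum_(i < N) c i * f i x) / pi ^+ k.
have cr : cont r.
  apply: (@cont_on_O_eq (fun x => (pi ^+ k)^-1 * (g x - \sum_(i < N) c i * f i x))).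
    by move=> x; rewrite mulrC.
  apply/cont_on_OZ/cont_on_OB => //.
  apply: (cont_on_O_sum (G := fun i x => c i * f i x)) => i _.
  exact/cont_on_OZ/f_cont.
have Or x : O x -> O (r x).
  by move=> Ox; rewrite /intO /= absM absV absX ler_pdivrMr ?rhoX_gt0 // mul1r; apply: gc.
have [N' [a [Oa a0 ra]]] := residue_approx cr Or.
exists (fun i => c i + pi ^+ k * a i), (maxn N N'); split=> [|i]; last first.
  by rewrite addrC addKr absM absX ler_piMr ?exprn_ge0 ?(ltW rho_gt0) ?Oa.
split=> [i|i|x Ox].
- exact: intOD (Oc i) (intOM (intO_piX k) (Oa i)).
- by rewrite geq_max => /andP [Ni N'i]; rewrite c0 // a0 // mulr0 addr0.
have sum_split : \sum_(i < maxn N N') (c i + pi ^+ k * a i) * f i x =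
    \sum_(i < N) c i * f i x + pi ^+ k * \sum_(i < N') a i * f i x.
  under eq_bigr do rewrite mulrDl -mulrA.
  rewrite big_split /= -mulr_sumr.
  rewrite (big_ord_idx_tail _ (G := fun i => c i * f i x) _ (leq_maxl N N')); last first.
    by move=> i Ni; rewrite c0 ?mul0r.
  rewrite (big_ord_idx_tail _ (G := fun i => a i * f i x) _ (leq_maxr N N')) //.
  by move=> i N'i; rewrite a0 ?mul0r.
have gr : g x - \sum_(i < N) c i * f i x = pi ^+ k * r x by rewrite /r mulrC divfK.
rewrite sum_split opprD addrA gr -mulrBr absM absX exprSr.
by rewrite ler_wpM2l ?exprn_ge0 ?(ltW rho_gt0) //; apply/abs_lt1_le_rho/ra.
Qed.

Lemma expansion_intO g : cont g -> (forall x, O x -> O (g x)) ->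
  exists c : nat -> K, [/\ forall i, O (c i), abs_converges abs c 0 &
    forall eps, 0 < eps -> exists N, forall m, (N <= m)%N -> forall x, O x ->
      abs (g x - \sum_(n < m) c n * f n x) < eps].
Proof.
move=> cg Og.
have step k (cN : (nat -> K) * nat) : approx_order g k cN.1 cN.2 ->
    exists2 cN', approx_order g k.+1 cN'.1 cN'.2 &
      forall i, abs (cN'.1 i - cN.1 i) <= rho ^+ k.
  by move/(approx_order_step cg) => [c' [N' [gc' cc']]]; exists (c', N').
have [S HS] := dependent_choice_nat (x0 := (fun=> 0, 0%N)) (approx_order0 Og) step.
have /choice [c Hc] i : exists l, forall k, abs (l - (S k).1 i) <= rho ^+ k.
  by apply: geometric_cauchy_limit => k; apply: (HS k).2.
exists c; split.
- move=> i; have [OS0 _ _] := (HS 0%N).1.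
  rewrite -(subrK ((S 0%N).1 i) (c i)); apply: intOD (OS0 i).
  by move: (Hc i 0%N); rewrite expr0.
- move=> eps e0; have [k Hk] := rhoX_lt e0; have [_ c0 _] := (HS k).1.
  exists (S k).2 => n Nn; apply: le_lt_trans Hk.
  by move: (Hc n k); rewrite c0.
move=> eps e0; have [k Hk] := rhoX_lt e0; have [_ c0 gc] := (HS k).1.
exists (S k).2 => m Nm x Ox; apply: le_lt_trans Hk.
have -> : g x - \sum_(n < m) c n * f n x =
    (g x - \sum_(i < (S k).2) (S k).1 i * f i x) + \sum_(i < m) ((S k).1 i - c i) * f i x.
  rewrite -(big_ord_idx_tail _ (G := fun i => (S k).1 i * f i x) _ Nm); last first.
    by move=> i Ni; rewrite c0 ?mul0r.
  under [X in _ = _ + X]eq_bigr do rewrite mulrBl.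
  rewrite sumrB; ring.
apply: abs_ultra_le (gc x Ox) _.
apply: (abs_ultra_sum_le (G := fun i => ((S k).1 i - c i) * f i x)) => [|i _].
  exact/ltW/rhoX_gt0.
rewrite absM abs_distC; apply: le_trans (Hc i k).
by rewrite ler_piMr ?abs_ge0 //; apply: (f_intO).
Qed.

Lemma unit_coefficient g (c : nat -> K) x0 m :
  (forall i, O (c i)) -> O x0 -> abs (g x0) = 1 ->
  abs (g x0 - \sum_(n < m) c n * f n x0) < 1 -> exists i, abs (c i) = 1.
Proof.
move=> Oc Ox0 gx0 gm; apply: contrapT => /forallNP noc.
have small : abs (\sum_(n < m) c n * f n x0) < 1.
  apply: (abs_ultra_sum_lt (G := fun n => c n * f n x0)) => [|n _]; first exact: ltr01.
  rewrite absM; apply: le_lt_trans (_ : _ <= abs (c n)) _.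
    by rewrite ler_piMr ?abs_ge0 //; apply: (f_intO).
  by rewrite lt_neqAle Oc andbT; apply/eqP/noc.
by have := abs_ultra_lt gm small; rewrite subrK gx0 ltxx.
Qed.

Lemma digit_ext_expansion g : cont g -> exists c : nat -> K,
  [/\ abs_converges abs c 0,
      forall eps, 0 < eps -> exists N, forall m, (N <= m)%N -> forall x, O x ->
        abs (g x - \sum_(n < m) c n * f n x) < eps &
      sup_norm abs g = sup [set abs (c n) | n in [set: nat]]].
Proof.
move=> cg; have [x0 Ox0 gmax] := abs_attains_max cg; set lam := g x0.
have lam_gt0 : lam != 0 -> 0 < abs lam by move=> lam0; rewrite lt_def abs_neq0 ?abs_ge0.
pose g' x := lam^-1 * g x.
have Og' x : O x -> O (g' x).
  move=> Ox; rewrite /intO /= absM absV; have [lam0|/lam_gt0 lam0] := eqVneq lam 0.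
    by rewrite lam0 abs0 invr0 mul0r ler01.
  by rewrite mulrC ler_pdivrMr ?mul1r ?gmax.
have g_lam x : O x -> g x = lam * g' x.
  move=> Ox; have [lam0|lam0] := eqVneq lam 0; last by rewrite /g' mulrA mulfV ?mul1r.
  rewrite lam0 mul0r; apply/abs_eq0/le_anti; rewrite abs_ge0 andbT -abs0 -lam0.
  exact: gmax.
have [c [Oc cc0 cunif]] := expansion_intO (cont_on_OZ _ cg) Og'.
have [i0 ci0] : exists i, abs (lam * c i) = abs lam.
  have [->|lam0] := eqVneq lam 0; first by exists 0%N; rewrite mul0r.
  have [N HN] := cunif 1 ltr01.
  have g'x0 : abs (g' x0) = 1 by rewrite absM absV mulVf ?abs_neq0.
  have [i ci] := unit_coefficient Oc Ox0 g'x0 (HN N (leqnn N) x0 Ox0).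
  by exists i; rewrite absM ci mulr1.
have lam1 : 0 < abs lam + 1 by rewrite ltr_wpDl ?abs_ge0.
exists (fun i => lam * c i); split.
- move=> eps e0; have [N HN] := cc0 _ (divr_gt0 e0 lam1).
  by exists N => n Nn; rewrite subr0 abs_mul_lt //; move: (HN n Nn); rewrite subr0.
- move=> eps e0; have [N HN] := cunif _ (divr_gt0 e0 lam1).
  exists N => m Nm x Ox; rewrite (g_lam x Ox).
  have -> : lam * g' x - \sum_(n < m) lam * c n * f n x =
      lam * (g' x - \sum_(n < m) c n * f n x).
    by rewrite mulrBr mulr_sumr; congr (_ - _); apply: eq_bigr => n _; rewrite mulrA.
  exact: abs_mul_lt (HN m Nm x Ox).
rewrite /sup_norm (@sup_eq_max _ _ (abs lam)); last 2 first.
- by exists x0.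
- by move=> _ [x Ox <-]; apply: gmax.
apply/esym/sup_eq_max; first by exists i0.
by move=> _ [n _ <-]; rewrite absM ler_piMr ?abs_ge0 ?Oc.
Qed.

End Basis.
End Filtration.
End LocalField.
End NonArchimedean.

Theorem theorem3p3 (R : realType) (K : fieldType) (abs : K -> R)
  (F : finFieldType) (red : K -> F) (H : nat -> set K) (e : nat -> K -> K) :
  local_field abs red ->
  (forall n, (1 <= n)%N -> open_subgroup_O abs (H n)) ->
  (forall n, (1 <= n)%N -> H n.+1 `<=` H n) ->
  (forall x, (forall n, (1 <= n)%N -> H n x) <-> x = 0) ->
  (forall j, cont_on_O abs (e j) /\ (forall x, intO abs x -> intO abs (e j x))) ->
  (forall n, (1 <= n)%N ->
     [/\ (* reductions constant on cosets of H_n *)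
         (forall x y, intO abs x -> intO abs y -> H n (x - y) ->
            forall j, (j < n)%N -> red (e j x) = red (e j y)),
         (* induced map O/H_n -> F^n injective *)
         (forall x y, intO abs x -> intO abs y ->
            (forall j, (j < n)%N -> red (e j x) = red (e j y)) -> H n (x - y)) &
         (* induced map O/H_n -> F^n surjective *)
         (forall t : 'I_n -> F, exists2 x, intO abs x &
            forall j : 'I_n, red (e j x) = t j)]) ->
  orthonormal_basis abs (digit_ext #|F| e).
Proof.
move=> [abs_na [pi [pi_unif abs_discrete]] abs_compl red_res] H_open H_decr H_cap.
move=> e_cont e_bij.
have e_sep n n1 := let: And3 _ sep _ := e_bij n n1 in sep.
have e_surj n n1 := let: And3 _ _ surj := e_bij n n1 in surj.
split=> [i|g cg].
  exact: (digit_ext_cont abs_na #|F| e_cont i).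
exact: (digit_ext_expansion abs_na red_res pi_unif abs_discrete abs_compl
  H_open H_decr H_cap e_cont e_sep e_surj cg).
Qed.
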